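(* Let $n\geq 2$ be an integer and let $L_n$ be the $n$-element MV-chain. Then the number of $(\odot,\vee)$-derivations on $L_n$ is exactly $$|\operatorname{Der}(L_n)|=\frac{(n-1)(n+2)}{2}.$$
   Context: An MV-algebra is an algebra $(A,\oplus,{}^*,0)$ of type $(2,1,0)$ satisfying: $x\oplus(y\oplus z)=(x\oplus y)\oplus z$, $x\oplus y=y\oplus x$, $x\oplus 0=x$, $x^{**}=x$, $x\oplus 0^*=0^*$, $(x^*\oplus y)^*\oplus y=(y^*\oplus x)^*\oplus x$. Put $1=0^*$ and $x\odot y=(x^*\oplus y^* )^*$. The natural order is $x\le y$ iff $x^*\oplus y=1$; it makes $A$ a bounded distributive lattice with $x\vee y=(x\odot y^* )\oplus y$ and $x\wedge y=x\odot(x^*\oplus y)$. A $(\odot,\vee)$-derivation on an MV-algebra $A$ is a map $d:A\to A$ with $d(x\odot y)=(d(x)\odot y)\vee(x\odot d(y))$ for all $x,y\in A$; $\operatorname{Der}(A)$ denotes the set of all of them. $L_n=\{0,\frac1{n-1},\dots,\frac{n-2}{n-1},1\}\subseteq[0,1]$ with $x\oplus y=\min\{1,x+y\}$ and $x^*=1-x$ (so $x\odot y=\max\{0,x+y-1\}$). *)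

From mathcomp Require Import all_boot.
Set Implicit Arguments. Unset Strict Implicit. Unset Printing Implicit Defensive.

(* The n-element MV-chain L_n = {0, 1/(n-1), ..., 1}, encoded by numerators:
   the ordinal k : 'I_(n-1).+1 stands for k/(n-1). With m = n-1:
     x (+) y = min{1, x+y}   <->  minn m (x + y)
     x^*     = 1 - x         <->  m - x
     0       <->  0 *)
Definition Ln (n : nat) : finType := 'I_(n.-1).+1.

Section MVChain.
Variable n : nat.
Local Notation m := n.-1.

Definition mv_zero : Ln n := ord0.
Definition mv_oplus (x y : Ln n) : Ln n := inord (minn m (x + y)).
Definition mv_star (x : Ln n) : Ln n := inord (m - x).
Definition mv_one : Ln n := mv_star mv_zero.
Definition mv_odot (x y : Ln n) : Ln n := mv_star (mv_oplus (mv_star x) (mv_star y)).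
Definition mv_join (x y : Ln n) : Ln n := mv_oplus (mv_odot x (mv_star y)) y.

Definition is_derivation (d : {ffun Ln n -> Ln n}) : bool :=
  [forall x, forall y,
     d (mv_odot x y) == mv_join (mv_odot (d x) y) (mv_odot x (d y))].

Definition Der : {set {ffun Ln n -> Ln n}} := [set d | is_derivation d].
End MVChain.

From mathcomp Require Import all_boot zify.

(* On
   numerators x (.) y = x + y - m (truncated) and x v y = max x y, so a map d
   is a derivation iff, writing g for d on numerators,
       g (i + j - m) = max (g i + j - m) (i + g j - m)     for all i, j <= m.
   Specialising to j = m - 1 and descending from m - 1 shows that g is the
   affine map x |-> x + a + 1 - m below m, where a = g (m - 1); the cases
   i = j = 0 and (i, j) = (m, m - 1) then force a < m and g m <= a + 1.
   Conversely every such data (a, b) defines a derivation delta a b.  Hence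
   Der(L_n) is the injective image of the set of pairs
       { (a, b) | a < m, b <= a + 1 },
   which has sum_{a < m} (a + 2) = m (m + 3) / 2 = (n - 1)(n + 2) / 2
   elements. *)

Section MVChainDerivations.
Variable m : nat.
Local Notation T := ('I_m.+1).

Lemma val_oplus (x y : T) : mv_oplus (n := m.+1) x y = minn m (x + y) :> nat.
Proof. by rewrite /mv_oplus inordK // ltnS geq_minl. Qed.

Lemma val_star (x : T) : mv_star (n := m.+1) x = m - x :> nat.
Proof. by rewrite /mv_star inordK // ltnS leq_subr. Qed.

Lemma val_odot (x y : T) : mv_odot (n := m.+1) x y = x + y - m :> nat.
Proof.
rewrite /mv_odot val_star val_oplus !val_star.
by have := ltn_ord x; have := ltn_ord y; lia.
Qed.

Lemma val_join (x y : T) : mv_join (n := m.+1) x y = maxn x y :> nat.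
Proof.
rewrite /mv_join val_oplus val_odot val_star.
by have := ltn_ord x; have := ltn_ord y; lia.
Qed.

Definition num (d : {ffun T -> T}) (k : nat) : nat := d (inord k).

Lemma num_le (d : {ffun T -> T}) (k : nat) : num d k <= m.
Proof. by rewrite -ltnS ltn_ord. Qed.

Lemma num_val (d : {ffun T -> T}) (x : T) : d x = num d x :> nat.
Proof. by rewrite /num inord_val. Qed.

Lemma derivationP (d : {ffun T -> T}) :
  reflect (forall i j, i <= m -> j <= m ->
             num d (i + j - m) = maxn (num d i + j - m) (i + num d j - m))
          (is_derivation (n := m.+1) d).
Proof.
have odotE (x y : T) : mv_odot (n := m.+1) x y = inord (x + y - m).
  apply: val_inj; rewrite /= val_odot inordK //.
  by have := ltn_ord x; have := ltn_ord y; lia.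
apply: (iffP forallP) => [der_id i j lei lej | der_id x].
  have /forallP/(_ (inord j))/eqP/(congr1 (@nat_of_ord _)) := der_id (inord i).
  by rewrite odotE val_join !val_odot !inordK ?ltnS.
apply/forallP => y; apply/eqP/(@ord_inj m.+1).
rewrite odotE val_join !val_odot -/(num d (x + y - m)) !num_val.
by apply: der_id; rewrite -ltnS ltn_ord.
Qed.

(* The pairs (d (m - 1), d m) that occur for derivations d. *)
Definition pairs : {set T * T} :=
  [set p : T * T | (p.1 < m) && (p.2 <= p.1.+1)].

Definition delta (a b : T) : {ffun T -> T} :=
  [ffun x : T => if x < m then inord (x + a.+1 - m) else b].

Lemma num_delta_lt (a b : T) (x : nat) :
  x < m -> num (delta a b) x = x + a.+1 - m.
Proof.
move=> ltxm; have lt_a := ltn_ord a.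
rewrite /num ffunE inordK; last lia.
by rewrite ltxm inordK //; lia.
Qed.

Lemma num_delta_top (a b : T) : num (delta a b) m = b.
Proof. by rewrite /num ffunE inordK // ltnn. Qed.

Section DerivationShape.
Variable d : {ffun T -> T}.
Hypothesis m_gt0 : 0 < m.
Hypothesis der_d : is_derivation (n := m.+1) d.

(* Below m a derivation is affine with slope 1, determined by its value at
   m - 1: descending induction on the identity with j = m - 1. *)
Lemma derivation_affine (x : nat) :
  x < m -> num d x = x + (num d m.-1).+1 - m.
Proof.
have der_id := derivationP d der_d.
suff down k : k < m -> num d (m.-1 - k) = m.-1 - k + (num d m.-1).+1 - m.
  by move=> ltxm; have := down (m.-1 - x); rewrite subKn; [apply; lia | lia].
elim: k => [|k IH] ltkm; first by rewrite subn0; have := num_le d m.-1; lia.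
have := der_id (m.-1 - k) m.-1; rewrite IH; last lia.
have -> : m.-1 - k + m.-1 - m = m.-1 - k.+1 by lia.
by move=> -> //; lia.
Qed.

(* Taking i = j = 0 gives d 0 = 0, hence a = d (m - 1) < m; taking i = m,
   j = m - 1 bounds d m by a + 1. *)
Lemma derivation_pair : (d (inord m.-1), d (inord m)) \in pairs.
Proof.
have der_id := derivationP d der_d.
have num0 : num d 0 = 0.
  have := der_id 0 0 (leq0n m) (leq0n m); rewrite !add0n sub0n.
  by have := num_le d 0; lia.
have := @derivation_affine 0 m_gt0; rewrite num0 => affine0.
have := der_id m m.-1 (leqnn m); have -> : m + m.-1 - m = m.-1 by lia.
rewrite inE /= -/(num d m.-1) -/(num d m) => top.
by apply/andP; split; lia.
Qed.

Lemma derivation_eq_delta : d = delta (d (inord m.-1)) (d (inord m)).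
Proof.
apply/ffunP => x; apply: (@ord_inj m.+1).
rewrite (num_val d) (num_val (delta _ _)) -/(num d m.-1).
have [ltxm | ] := ltnP x m; first by rewrite num_delta_lt // derivation_affine.
have := ltn_ord x; rewrite ltnS => lexm gexm.
have -> : nat_of_ord x = m by lia.
by rewrite num_delta_top.
Qed.
End DerivationShape.

(* Conversely each pair gives a derivation: check the identity by cases on
   whether i, j and i + j - m lie below m. *)
Lemma delta_derivation (a b : T) :
  (a, b) \in pairs -> is_derivation (n := m.+1) (delta a b).
Proof.
rewrite inE /= => /andP [lt_am le_ba]; apply/derivationP => i j lei lej.
have numE k : k <= m -> num (delta a b) k = if k < m then k + a.+1 - m else b.
  move=> lekm; case: ltnP => [|gekm]; first exact: num_delta_lt.
  have -> : k = m by lia.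
  exact: num_delta_top.
rewrite !numE //; try lia.
by case: (ltnP i m); case: (ltnP j m); case: (ltnP (i + j - m) m); lia.
Qed.

(* delta a b recovers a at m - 1 and b at m. *)
Lemma delta_inj : {in pairs &, injective (fun p : T * T => delta p.1 p.2)}.
Proof.
move=> [a b] [a' b']; rewrite !inE /= => /andP [lt_am _] /andP [lt_a'm _] E.
congr pair; apply: val_inj.
  have := congr1 (num^~ m.-1) E; rewrite /= !num_delta_lt; lia.
by have := congr1 (num^~ m) E; rewrite /= !num_delta_top.
Qed.

Lemma Der_image : 0 < m ->
  Der m.+1 = [set delta p.1 p.2 | p in pairs].
Proof.
move=> m_gt0; apply/setP => d; rewrite inE; apply/idP/imsetP.
  move=> der_d; exists (d (inord m.-1), d (inord m)).
    exact: derivation_pair.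
  exact: derivation_eq_delta.
by move=> [[a b] ab_pairs ->]; exact: delta_derivation.
Qed.

Lemma count_ord_le (k c : nat) :
  \sum_(j < k) (j <= c) = minn k c.+1.
Proof.
elim: k => [|k IH]; first by rewrite big_ord0.
by rewrite big_ord_recr /= IH; case: leqP => /=; lia.
Qed.

(* Each a < m admits the a + 2 values b <= a + 1; a = m admits none. *)
Lemma card_pairs : #|pairs| = \sum_(a < m) a.+2.
Proof.
rewrite -sum1_card big_mkcond /=.
rewrite (eq_bigr (fun p : T * T => nat_of_bool ((p.1 < m) && (p.2 <= p.1.+1))));
  last by move=> p _; rewrite inE.
rewrite -(pair_bigA _ (fun a b : T => nat_of_bool ((a < m) && (b <= a.+1)))) /=.
rewrite big_ord_recr /= ltnn /= big1_eq addn0.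
apply: eq_bigr => a _; rewrite ltn_ord count_ord_le.
by have := ltn_ord a; lia.
Qed.
End MVChainDerivations.

Lemma double_sum_succ2 (m : nat) : (\sum_(a < m) a.+2) * 2 = m * (m + 3).
Proof.
elim: m => [|m IH]; first by rewrite big_ord0.
by rewrite big_ord_recr /= mulnDl IH; lia.
Qed.

Theorem theorem3p11 (n : nat) (hn : 2 <= n) :
  #|Der n| = ((n - 1) * (n + 2)) %/ 2.
Proof.
case: n hn => [//|m] m_gt0.
rewrite (@Der_image m m_gt0) (card_in_imset (@delta_inj m)) card_pairs.
have -> : (m.+1 - 1) * (m.+1 + 2) = (\sum_(a < m) a.+2) * 2.
  by rewrite double_sum_succ2; lia.
by rewrite mulnK.
Qed.
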